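(* Let $(\mathcal{N},r)$ be a ranked $X$-cactus. Then $\mathcal{S}_i(\mathcal{N})\prec\mathcal{S}_j(\mathcal{N})$ for all $0\le i<j\le\sigma(r)$, and $\mathcal{S}_{\sigma(r)}(\mathcal{N})=\{(X,\emptyset)\}$.
   Context: Let $X$ be a finite non-empty set. A rooted DAG $N=(V,A)$ is a finite directed acyclic graph with a vertex $\rho$ of indegree $0$ (the root) from which every vertex is reachable. Leaf: outdegree $0$; tree vertex: indegree $\le1$; reticulation vertex: indegree $\ge 2$; if $(u,v)\in A$, $u$ is a parent of $v$ and $v$ a child of $u$. A reticulation cycle consists of two distinct directed paths with the same start and end vertex and no other common vertices. A rooted $X$-cactus $\mathcal{N}=(N,\varphi)$ is a rooted DAG with $\varphi:X\to V$ such that every vertex has indegree $\le2$, no two distinct reticulation cycles share an arc, and $\varphi(X)$ contains all leaves and all tree vertices of outdegree $1$. A time-stamp function is $t:V\to\mathbb{R}_{\ge0}$ with $t(v)=0$ for $v\in\varphi(X)$; $t(u)>t(v)$ for every arc $(u,v)$ with $v$ not a reticulation vertex; $t(v)=t(p_1)=t(p_2)$ for each reticulation vertex $v$ with parents $p_1,p_2$. $\mathcal{N}$ is temporal if one exists; its size is $\sigma(t)=|t(V)|-1$. A ranking is a time-stamp function $r$ with $r(V)=\{0,\dots,\sigma(r)\}$; a ranked $X$-cactus is a rooted temporal $X$-cactus with a ranking. A vertex $u$ is a descendant of $v$ if some directed path from the root to $u$ contains $v$; strict if every such path contains $v$, non-strict otherwise. $S(u)=\{x:\varphi(x)$ strict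 descendant of $u\}$, $H(u)=\{x:\varphi(x)$ non-strict descendant of $u\}$. For $0\le i\le\sigma(r)$, $V_i=\{u\in V: r(u)\le i$ and $r(p)>i$ for all parents $p$ of $u\}$ and $\mathcal{S}_i(\mathcal{N})=\{(S(u),H(u)):u\in V_i\}\cup\{(H(u),\emptyset):u\in V_i, H(u)\ne\emptyset\}$. A set pair system on $X$ is a set of ordered pairs $(S,H)$ of subsets of $X$ with $S\ne\emptyset$ and $S\cap H=\emptyset$. On set pairs, $(S_1,H_1)\le(S_2,H_2)$ iff they are equal or one of: $S_1\cup H_1\subseteq S_2$; $S_1\cup H_1\subseteq H_2$; $S_1\subsetneq S_2$ and $H_1=H_2\ne\emptyset$. For set pair systems, $\mathcal{S}_1\preceq\mathcal{S}_2$ iff (SP1) for every $(S_1,H_1)\in\mathcal{S}_1$ there is $(S_2,H_2)\in\mathcal{S}_2$ with $(S_1,H_1)\le(S_2,H_2)$, and (SP2) for every $(S_2,H_2)\in\mathcal{S}_2$ with $H_2\ne\emptyset$, if some $(S_1,H_1)\in\mathcal{S}_1$ has $H_1=H_2$, then some such $(S_1,H_1)$ satisfies $(S_1,H_1)\le(S_2,H_2)$. $\mathcal{S}_1\prec\mathcal{S}_2$ means $\mathcal{S}_1\preceq\mathcal{S}_2$ and $\mathcal{S}_1\ne\mathcal{S}_2$. *)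

From mathcomp Require Import all_boot all_order.
From mathcomp Require Import boolp.
Set Implicit Arguments. Unset Strict Implicit. Unset Printing Implicit Defensive.

Section Cactus.
Variables (X V : finType) (A : rel V) (rho : V) (phi : X -> V).

Definition indeg (v : V) : nat := #|[set p | A p v]|.
Definition outdeg (v : V) : nat := #|[set c | A v c]|.
Definition is_leaf (v : V) : bool := outdeg v == 0.
Definition is_tree_vertex (v : V) : bool := indeg v <= 1.
Definition is_reticulation (v : V) : bool := 2 <= indeg v.

Definition acyclic : Prop := forall u v, A u v -> ~~ connect A v u.
Definition rooted_dag : Prop :=
  [/\ acyclic, (forall p, ~~ A p rho) & (forall v, connect A rho v)].

(* directed path s = v0 -> v1 -> ... -> vk = t, written as s and (v1..vk) *)
Definition dpath (s : V) (p : seq V) (t : V) : bool :=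
  [&& path A s p, last s p == t & uniq (s :: p)].
Definition path_arcs (s : V) (p : seq V) : seq (V * V) := zip (s :: p) p.

Definition ret_cycle (s t : V) (p1 p2 : seq V) : Prop :=
  [/\ dpath s p1 t, dpath s p2 t, p1 != p2 &
      forall v, v \in s :: p1 -> v \in s :: p2 -> v = s \/ v = t].
Definition cycle_arcs (s : V) (p1 p2 : seq V) : seq (V * V) :=
  path_arcs s p1 ++ path_arcs s p2.

(* a reticulation cycle is the unordered pair of its two paths *)
Definition no_shared_arc : Prop :=
  forall s t p1 p2 s' t' q1 q2,
    ret_cycle s t p1 p2 -> ret_cycle s' t' q1 q2 ->
    (exists e, e \in cycle_arcs s p1 p2 /\ e \in cycle_arcs s' q1 q2) ->
    s = s' /\ ((p1 = q1 /\ p2 = q2) \/ (p1 = q2 /\ p2 = q1)).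

Definition rooted_cactus : Prop :=
  [/\ rooted_dag,
      (forall v, indeg v <= 2),
      no_shared_arc &
      (forall v, (is_leaf v || (is_tree_vertex v && (outdeg v == 1))) ->
                 exists x, phi x = v)].

(* time-stamp functions; a ranking takes values in {0,...,sigma}, so we
   take time-stamps with natural-number values here *)
Definition is_time_stamp (t : V -> nat) : Prop :=
  [/\ (forall x, t (phi x) = 0),
      (forall u v, A u v -> ~~ is_reticulation v -> t v < t u) &
      (forall p v, A p v -> is_reticulation v -> t p = t v)].

(* size sigma(r) = |r(V)| - 1 ; for a ranking this is the maximal value *)
Definition sigma (r : V -> nat) : nat := \max_(v : V) r v.

Definition is_ranking (r : V -> nat) : Prop :=
  is_time_stamp r /\ (forall k, k <= sigma r -> exists v, r v = k).

Definition ranked_cactus (r : V -> nat) : Prop :=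
  rooted_cactus /\ is_ranking r.

Definition root_path (p : seq V) (u : V) : bool := path A rho p && (last rho p == u).
Definition descendant (u v : V) : Prop :=
  exists p, root_path p u /\ v \in rho :: p.
Definition strict_descendant (u v : V) : Prop :=
  descendant u v /\ (forall p, root_path p u -> v \in rho :: p).
Definition nonstrict_descendant (u v : V) : Prop :=
  descendant u v /\ ~ (forall p, root_path p u -> v \in rho :: p).

Definition Sset (u : V) : {set X} := [set x | `[< strict_descendant (phi x) u >]].
Definition Hset (u : V) : {set X} := [set x | `[< nonstrict_descendant (phi x) u >]].

Definition Vi (r : V -> nat) (i : nat) : {set V} :=
  [set u | (r u <= i) && [forall p, A p u ==> (i < r p)]].

Definition Si (r : V -> nat) (i : nat) : {set {set X} * {set X}} :=
  [set (Sset u, Hset u) | u in Vi r i] :|: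
  [set (Hset u, set0) | u in [set u in Vi r i | Hset u != set0]].

End Cactus.

Definition sp_le (X : finType) (a b : {set X} * {set X}) : bool :=
  let: (S1, H1) := a in let: (S2, H2) := b in
  [|| a == b, (S1 :|: H1) \subset S2, (S1 :|: H1) \subset H2 |
      [&& S1 \proper S2, H1 == H2 & H2 != set0]].

Definition sps_le (X : finType) (S1 S2 : {set {set X} * {set X}}) : Prop :=
  (forall a, a \in S1 -> exists2 b, b \in S2 & sp_le a b) /\
  (forall b, b \in S2 -> b.2 != set0 ->
     (exists2 a, a \in S1 & a.2 = b.2) ->
     exists2 a, a \in S1 & a.2 = b.2 /\ sp_le a b).

Definition sps_lt (X : finType) (S1 S2 : {set {set X} * {set X}}) : Prop :=
  sps_le S1 S2 /\ S1 <> S2.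

(* In a cactus no arc lies on two reticulation cycles, so two root paths that
   diverge close up a unique cycle.  Hence for a tree vertex w: S(w) is never
   empty, H(w) is empty unless w lies on a side of a cycle, and then H(w) is
   the set of labels below the sink of that cycle.  Comparing a tree vertex
   with a tree vertex above it then yields exactly one of the three strict
   cases of the order on set pairs.  Every vertex of V_i has an ancestor in
   V_j for i < j, which gives (SP1); going down the cycle side of a vertex of
   V_j to V_i keeps H and gives (SP2).  A vertex of rank j lies in V_j, and
   its pair cannot occur at a lower level, so the systems differ; V_sigma is
   the root alone. *)

From mathcomp Require Import all_boot all_order.
From mathcomp Require Import boolp.
Set Implicit Arguments. Unset Strict Implicit. Unset Printing Implicit Defensive.

Section Arcs.
Variable T : eqType.
Implicit Types (s x y : T) (p q : seq T).

Lemma mem_arcsP s p x y :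
  (x, y) \in zip (s :: p) p <-> exists l1 l2, s :: p = l1 ++ x :: y :: l2.
Proof.
elim: p s => [|z p IH] s /=.
  by split=> // [[[|? [|? ?]] [l2]]].
rewrite in_cons; split.
  case/orP=> [/eqP [-> ->]|]; first by exists [::], p.
  by case/IH=> l1 [l2 e]; exists (s :: l1), l2; rewrite e.
case=> [[|a l1] [l2]] /=; first by case=> -> -> _; rewrite eqxx.
by case=> _ e; apply/orP; right; apply/IH; exists l1, l2.
Qed.

Lemma mem_arcs s p x y : (x, y) \in zip (s :: p) p -> x \in s :: p /\ y \in p.
Proof.
case/mem_arcsP=> l1 [l2 e]; split; first by rewrite e mem_cat !inE eqxx orbT.
case: l1 e => [|a l1] [_ ->]; first by rewrite mem_head.
by rewrite mem_cat !inE eqxx !orbT.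
Qed.

Lemma arcs_infix s p a q l1 l2 x y : s :: p = l1 ++ a :: q ++ l2 ->
  (x, y) \in zip (a :: q) q -> (x, y) \in zip (s :: p) p.
Proof.
move=> e /mem_arcsP [k1 [k2 e2]]; apply/mem_arcsP.
by exists (l1 ++ k1), (k2 ++ l2); rewrite e -catA -cat_cons e2 -catA.
Qed.

Lemma arcs_last_cat s p y q : (last s p, y) \in zip (s :: p ++ y :: q) (p ++ y :: q).
Proof.
by apply/mem_arcsP; exists (belast s p), q; rewrite -cat_cons lastI cat_rcons.
Qed.

Lemma arcs_out s p x : x \in s :: p -> x != last s p ->
  exists y, (x, y) \in zip (s :: p) p.
Proof.
elim: p s => [|z p IH] s /=; first by rewrite inE => /eqP ->; rewrite eqxx.
rewrite inE => /orP [/eqP -> _|xp ne]; first by exists z; rewrite mem_head.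
by case: (IH z xp ne) => y Hy; exists y; rewrite inE Hy orbT.
Qed.

Lemma arcs_in s p y : y \in p -> exists x, (x, y) \in zip (s :: p) p.
Proof.
elim: p s => [|z p IH] s //; rewrite inE => /orP [/eqP ->|yp].
  by exists s; rewrite mem_head.
by case: (IH z yp) => x Hx; exists x; rewrite inE Hx orbT.
Qed.

Lemma arcs_uniq_out s p x y y' : uniq (s :: p) ->
  (x, y) \in zip (s :: p) p -> (x, y') \in zip (s :: p) p -> y = y'.
Proof.
elim: p s => [|z p IH] s //= /andP [sp U]; rewrite !inE.
case/orP=> [/eqP [xs ->]|H] /orP [/eqP [xs' ->]|H'] //; last exact: IH U H H'.
- by case/mem_arcs: H' => x_in; rewrite -xs x_in in sp.
- by case/mem_arcs: H => x_in; rewrite -xs' x_in in sp.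
Qed.

Lemma arcs_uniq_in s p x x' y : uniq (s :: p) ->
  (x, y) \in zip (s :: p) p -> (x', y) \in zip (s :: p) p -> x = x'.
Proof.
elim: p s => [|z p IH] s //= /andP [_ U]; rewrite !inE.
case/orP=> [/eqP [-> yz]|H] /orP [/eqP [-> yz']|H'] //; last exact: IH U H H'.
- by case/mem_arcs: H' => _ y_in; move: U; rewrite -yz /= y_in.
- by case/mem_arcs: H => _ y_in; move: U; rewrite -yz' /= y_in.
Qed.

Lemma uniq_last_head s p : uniq (s :: p) -> last s p = s -> p = [::].
Proof. by case: p => // h p /andP [sn _] el; move: sn; rewrite -el /= mem_last. Qed.

Lemma uniq_arcs_last s p y : uniq (s :: p) -> (s, y) \in zip (s :: p) p ->
  last s p = y -> p = [:: y].
Proof.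
case: p => [|h p] //= U ar el.
have ey : y = h by apply: (arcs_uniq_out U ar); rewrite mem_head.
by move: el; rewrite ey => el; case/andP: U => _ U; rewrite (uniq_last_head U el).
Qed.

Lemma has_split_first (P : pred T) p : has P p ->
  exists l1 x l2, [/\ p = l1 ++ x :: l2, P x & ~~ has P l1].
Proof.
elim: p => [|y p IH] //= /orP [Py|Hp]; first by exists [::], y, p.
case: (boolP (P y)) => Py; first by exists [::], y, p.
case: (IH Hp) => l1 [x [l2 [-> Px Hn]]]; exists (y :: l1), x, l2.
by rewrite /= (negbTE Py).
Qed.

Lemma has_split_last (P : pred T) p : has P p ->
  exists l1 x l2, [/\ p = l1 ++ x :: l2, P x & ~~ has P l2].
Proof.
elim: p => [|y p IH] //= /orP Hp.
case: (boolP (has P p)) => [/IH [l1 [x [l2 [-> Px Hn]]]]|Hp'].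
  by exists (y :: l1), x, l2.
by case: Hp => [Py|H]; [exists [::], y, p | rewrite H in Hp'].
Qed.

Lemma mem_splitE x p : x \in p -> exists l1 l2, p = l1 ++ x :: l2.
Proof. by case/splitPr=> l1 l2; exists l1, l2. Qed.

Lemma arc_bridge (K : pred T) p x y l1 l2 :
  p = l1 ++ x :: y :: l2 -> has K (rcons l1 x) -> has K (y :: l2) ->
  exists P a q m S, [/\ p = P ++ a :: rcons q m ++ S, K a, K m, ~~ has K q &
    (x, y) \in zip (a :: rcons q m) (rcons q m)].
Proof.
move=> ep /has_split_last [P [a [mid1 [e1 Ka nK1]]]].
case/has_split_first=> mid2 [m [S [e2 Km nK2]]].
have ex : last a mid1 = x by have := congr1 (last x) e1; rewrite last_rcons last_cat.
have [k ek] : exists k, rcons mid2 m = y :: k.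
  by case: mid2 e2 {nK2} => [|h t] [-> _]; [exists [::] | exists (rcons t m)].
exists P, a, (mid1 ++ mid2), m, S; split => //.
- by rewrite ep -cat_rcons e1 e2 -!catA /= -cats1 -!catA.
- by rewrite has_cat negb_or nK1.
apply/mem_arcsP; exists (belast a mid1), k.
by rewrite rcons_cat ek -cat_cons lastI ex cat_rcons.
Qed.

End Arcs.

Lemma sp_le_refl (X : finType) (a : {set X} * {set X}) : sp_le a a.
Proof. by case: a => S H; rewrite /sp_le eqxx. Qed.

Section Dag.
Variables (V : finType) (A : rel V).

Lemma path_infix x p l1 y q l2 : path A x p -> x :: p = l1 ++ y :: q ++ l2 -> path A y q.
Proof.
move=> pp; case: l1 => [|h l1] /= [ex ep]; rewrite ep in pp.
  by rewrite -ex; move: pp; rewrite cat_path => /andP [].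
by move: pp; rewrite cat_path => /andP [_ /=] /andP [_]; rewrite cat_path => /andP [].
Qed.

Lemma path_arcs_rel s p x y : path A s p -> (x, y) \in zip (s :: p) p -> A x y.
Proof.
move=> pp /mem_arcsP [l1 [l2 e]].
have e' : s :: p = l1 ++ x :: (y :: l2) ++ [::] by rewrite cats0.
by have /andP [] := path_infix pp e'.
Qed.

Lemma path_connect_mem s p x : path A s p -> x \in s :: p ->
  connect A s x /\ connect A x (last s p).
Proof.
move=> pp xin; split; first exact: (path_connect pp).
case/splitPl: xin pp => p1 p2 <-; rewrite cat_path => /andP [_ pp2].
by rewrite last_cat; apply/connectP; exists p2.
Qed.

Lemma connect_first_arc u v : connect A u v -> u != v ->
  exists2 c, A u c & connect A c v.
Proof.
case/connectP => [[|c p] /=]; first by move=> _ ->; rewrite eqxx.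
by case/andP => Auc pp -> _; exists c => //; apply/connectP; exists p.
Qed.

Lemma connect_last_arc u v : connect A u v -> u != v ->
  exists2 c, connect A u c & A c v.
Proof.
case/connectP => p; case/lastP: p => [|p c] /=; first by move=> _ ->; rewrite eqxx.
rewrite rcons_path last_rcons => /andP [pp Al] -> _.
by exists (last u p) => //; apply/connectP; exists p.
Qed.

Lemma ret_cycleC s t p1 p2 : ret_cycle A s t p1 p2 -> ret_cycle A s t p2 p1.
Proof. by case=> d1 d2 ne H; split => // [|v h1 h2]; [rewrite eq_sym | apply: H]. Qed.

Lemma ret_cycle_dpath s t p1 p2 : ret_cycle A s t p1 p2 ->
  [/\ path A s p1, last s p1 = t & uniq (s :: p1)].
Proof. by case=> /and3P [pp /eqP lp up] _ _ _. Qed.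

Lemma ret_cycle_neq s t p1 p2 : ret_cycle A s t p1 p2 -> s != t.
Proof.
move=> C; apply/eqP => est.
have [_ l1 u1] := ret_cycle_dpath C; have [_ l2 u2] := ret_cycle_dpath (ret_cycleC C).
rewrite -est in l1 l2; case: C => _ _ + _.
by rewrite (uniq_last_head u1 l1) (uniq_last_head u2 l2) eqxx.
Qed.

Lemma ret_cycle_sink_mem s t p1 p2 : ret_cycle A s t p1 p2 -> t \in p1.
Proof.
move=> C; have [_ l1 _] := ret_cycle_dpath C; have := mem_last s p1.
by rewrite l1 inE eq_sym (negbTE (ret_cycle_neq C)).
Qed.

Lemma ret_cycle_src_notin s t p1 p2 : ret_cycle A s t p1 p2 -> s \notin p1.
Proof. by case/ret_cycle_dpath => _ _ /andP []. Qed.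

Lemma ret_cycle_connect s t p1 p2 v : ret_cycle A s t p1 p2 -> v \in s :: p1 ->
  connect A s v /\ connect A v t.
Proof. by case/ret_cycle_dpath => pp <- _; apply: path_connect_mem. Qed.

Lemma two_parents_reticulation a b v : A a v -> A b v -> a != b -> is_reticulation A v.
Proof.
move=> Aa Ab ne; rewrite /is_reticulation /indeg.
have <- : #|[set a; b]| = 2 by rewrite cards2 ne.
by apply: subset_leq_card; apply/subsetP => z; rewrite !inE => /orP [] /eqP ->.
Qed.

Lemma tree_parent_unique a b v : ~~ is_reticulation A v -> A a v -> A b v -> a = b.
Proof.
move=> tv Aa Ab; apply/eqP; apply: contraNT tv.
exact: two_parents_reticulation.
Qed.

Lemma reticulation_parent v : is_reticulation A v -> exists p, A p v.
Proof.
rewrite /is_reticulation /indeg => /(leq_trans (isT : 0 < 2)) /card_gt0P [p].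
by rewrite inE; exists p.
Qed.

Hypothesis acyclicA : acyclic A.

Lemma arc_irrefl u : ~~ A u u.
Proof. by apply/negP => /acyclicA; rewrite connect0. Qed.

Lemma connect_antisym u v : connect A u v -> connect A v u -> u = v.
Proof.
move=> Huv Hvu; apply/eqP/negPn/negP => ne.
have [c Auc Hcv] := connect_first_arc Huv ne.
by move: (acyclicA Auc); rewrite (connect_trans Hcv Hvu).
Qed.

Lemma acyclic_path_uniq s p : path A s p -> uniq (s :: p).
Proof.
elim: p s => [|c p IH] s //= /andP [Asc pp].
have /= -> := IH c pp; rewrite andbT; apply/negP => sin.
have [Hcs _] := path_connect_mem pp (sin : s \in c :: p).
by move: (acyclicA Asc); rewrite Hcs.
Qed.

Lemma path_connect_total s p x y : path A s p -> x \in s :: p -> y \in s :: p ->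
  connect A x y \/ connect A y x.
Proof.
move=> pp xin; case/splitPl: xin pp => p1 p2 <-.
rewrite cat_path -cat_cons mem_cat => /andP [pp1 pp2] /orP [yin|yin].
  by right; have [_ ->] := path_connect_mem pp1 yin.
by left; apply: (path_connect pp2); rewrite inE yin orbT.
Qed.

Lemma path_split_connect s p a m : path A s p -> a \in s :: p -> m \in s :: p ->
  connect A a m -> a != m -> exists l1 q l2, s :: p = l1 ++ a :: rcons q m ++ l2.
Proof.
move=> pp /mem_splitE [l1 [q' eq']]; rewrite eq' mem_cat inE => /or3P [ml1|/eqP->|mq'] am nam.
- have [k1 [k2 ek]] := mem_splitE ml1.
  have pm : path A m (k2 ++ a :: q').
    by apply: (path_infix (l1 := k1) (l2 := [::]) pp); rewrite eq' ek -catA cats0.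
  have ain : a \in m :: k2 ++ a :: q' by rewrite inE mem_cat mem_head !orbT.
  have [ma _] := path_connect_mem pm ain.
  by move: nam; rewrite (connect_antisym am ma) eqxx.
- by rewrite eqxx in nam.
have [q [l2 ->]] := mem_splitE mq'.
by exists l1, q, l2; rewrite cat_rcons.
Qed.

Lemma ret_cycle_bridge a m q1 q2 : path A a (rcons q1 m) -> path A a (rcons q2 m) ->
  ~~ has (mem (a :: rcons q2 m)) q1 -> rcons q1 m != rcons q2 m ->
  ret_cycle A a m (rcons q1 m) (rcons q2 m).
Proof.
move=> p1 p2 nq1 ne; split => //.
- by rewrite /dpath p1 last_rcons eqxx acyclic_path_uniq.
- by rewrite /dpath p2 last_rcons eqxx acyclic_path_uniq.
move=> v; rewrite inE mem_rcons inE => /or3P [/eqP->|/eqP->|vq1] vq2; [left|right|] => //.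
by move/hasPn: nq1 => /(_ v vq1) /negP.
Qed.

Lemma ret_cycle_of_paths z R Q x y :
  path A z R -> path A z Q -> last z R = last z Q ->
  (x, y) \in zip (z :: R) R -> (x, y) \notin zip (z :: Q) Q ->
  exists s t p1 p2, [/\ ret_cycle A s t p1 p2, (x, y) \in zip (s :: p1) p1,
     s \in z :: Q, t \in z :: Q &
     [/\ connect A t (last z R), (x \in z :: Q -> s = x) & (y \in z :: Q -> t = y)]].
Proof.
move=> pR pQ eL arR arQ; case/mem_arcsP: (arR) => l1 [l2 eR].
have hx : has (mem (z :: Q)) (rcons l1 x).
  apply/hasP; exists z; last exact: mem_head.
  by case: l1 eR => [|h l1] [-> _]; rewrite /= mem_head.
have hy : has (mem (z :: Q)) (y :: l2).
  apply/hasP; exists (last z Q); last exact: mem_last.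
  by rewrite -eL (_ : last z R = last z (z :: R)) // eR last_cat /= mem_last.
have [P [a [q1 [m [S [eR' Qa Qm nq1 arb]]]]]] := arc_bridge eR hx hy.
have pa : path A a (rcons q1 m) by apply: path_infix pR eR'.
have [am ma] : connect A a m /\ a != m.
  have [_ ] := path_connect_mem pa (mem_head a _); rewrite last_rcons; split => //.
  by have /andP [+ _] := acyclic_path_uniq pa; apply: contraNneq => ->; rewrite mem_rcons mem_head.
have [U [q2 [W eQ]]] := path_split_connect pQ Qa Qm am ma.
have pb : path A a (rcons q2 m) by apply: path_infix pQ eQ.
have yq : y \in rcons q1 m by case: (mem_arcs arb).
have ym : connect A y m.
  have yin : y \in a :: rcons q1 m by rewrite inE yq orbT.
  by have [_] := path_connect_mem pa yin; rewrite last_rcons.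
exists a, m, (rcons q1 m), (rcons q2 m); split => //; last split.
- apply: ret_cycle_bridge => //.
    apply: contra nq1 => /hasP [v vq1 vq2]; apply/hasP; exists v => //.
    have vQ : v \in a :: rcons q2 m by [].
    by change (v \in z :: Q); rewrite eQ -cat_cons !mem_cat vQ orbT.
  by apply/eqP => e; move/negP: arQ; apply; apply: (arcs_infix eQ); rewrite -e.
- have mR : m \in z :: R by rewrite eR' mem_cat inE mem_cat mem_rcons mem_head !orbT.
  by have [_] := path_connect_mem pR mR.
- move=> xQ; have : x \in a :: rcons q1 m by case: (mem_arcs arb).
  rewrite inE mem_rcons inE => /or3P [/eqP //|/eqP exm|xq1].
    by move: (acyclicA (path_arcs_rel pa arb)); rewrite exm ym.
  by move/hasPn: nq1 => /(_ x xq1) /negP.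
- move=> yQ; move: yq; rewrite mem_rcons inE => /orP [/eqP //|yq1].
  by move/hasPn: nq1 => /(_ y yq1) /negP.
Qed.

Lemma ret_cycle_of_branches v c c' y : A v c -> A v c' -> c != c' ->
  connect A c y -> connect A c' y ->
  exists t p1 p2, [/\ ret_cycle A v t p1 p2, (v, c) \in zip (v :: p1) p1 & connect A t y].
Proof.
move=> Ac Ac' ne /connectP [q qq ey] /connectP [q' qq' ey'].
have pR : path A v (c :: q) by rewrite /= Ac.
have pQ : path A v (c' :: q') by rewrite /= Ac'.
have eL : last v (c :: q) = last v (c' :: q') by rewrite /= -ey -ey'.
have arR : (v, c) \in zip (v :: c :: q) (c :: q) by rewrite mem_head.
have arQ : (v, c) \notin zip (v :: c' :: q') (c' :: q').
  apply/negP => H; move/eqP: ne; apply.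
  by apply: (arcs_uniq_out (acyclic_path_uniq pQ) H); rewrite mem_head.
have [s [t [p1 [p2 [C H1 _ _ [ty Hs _]]]]]] := ret_cycle_of_paths pR pQ eL arR arQ.
rewrite /= -ey in ty; rewrite (Hs (mem_head _ _)) in C H1.
by exists t, p1, p2.
Qed.

Section Rooted.
Variable rho : V.
Hypothesis root_no_parent : forall p, ~~ A p rho.
Hypothesis connect_root : forall v, connect A rho v.

Lemma root_pathP y : exists p, root_path A rho p y.
Proof.
by case/connectP: (connect_root y) => p pp ->; exists p; rewrite /root_path pp eqxx.
Qed.

Lemma parent_exists v : v != rho -> exists p, A p v.
Proof.
by rewrite eq_sym => /(connect_last_arc (connect_root v)) [c _ Acv]; exists c.
Qed.

Definition dominates (u y : V) := forall p, root_path A rho p y -> u \in rho :: p.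

Lemma descendantE y u : descendant A rho y u <-> connect A u y.
Proof.
split; first by case=> p [/andP [pp /eqP <-] /(path_connect_mem pp) []].
case/connectP => q qq ->; case/connectP: (connect_root u) => p pp ep.
exists (p ++ q); split; last by rewrite -cat_cons mem_cat ep mem_last.
by rewrite /root_path cat_path pp -ep qq last_cat -ep eqxx.
Qed.

Lemma dominates_connect u y : dominates u y -> connect A u y.
Proof.
move=> D; have [p rp] := root_pathP y; have := D _ rp.
by case/andP: rp => pp /eqP <- /(path_connect_mem pp) [].
Qed.

Lemma strict_descendantE y u : strict_descendant A rho y u <-> dominates u y.
Proof. by split=> [[]//|D]; split=> //; apply/descendantE/dominates_connect. Qed.

Lemma nonstrict_descendantE y u :
  nonstrict_descendant A rho y u <-> connect A u y /\ ~ dominates u y.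
Proof. by split; case=> /descendantE. Qed.

Lemma not_dominatesP u y : ~ dominates u y ->
  exists2 p, root_path A rho p y & u \notin rho :: p.
Proof.
move=> nD; apply: contrapT => nex; apply: nD => p rp.
by apply/negPn/negP => un; apply: nex; exists p.
Qed.

Lemma dominates_root y : dominates rho y.
Proof. by move=> p _; rewrite mem_head. Qed.

Lemma dominates_on_path a b Q : dominates a b -> path A rho Q -> b \in rho :: Q ->
  a \in rho :: Q.
Proof.
move=> D pQ bQ; case/splitPl: bQ pQ => Qa Qb lQa; rewrite cat_path => /andP [pQa _].
by have := D Qa; rewrite /root_path pQa lQa eqxx -cat_cons mem_cat => /(_ isT) ->.
Qed.

Lemma dominates_trans a b c : dominates a b -> dominates b c -> dominates a c.
Proof.
move=> Dab Dbc p rp; have := Dbc _ rp; case/andP: rp => pp _ bp.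
by apply: dominates_on_path Dab pp bp.
Qed.

Lemma dominates_total a b y : dominates a y -> dominates b y ->
  connect A a b \/ connect A b a.
Proof.
move=> Da Db; have [p rp] := root_pathP y.
by case/andP: (rp) => pp _; apply: (path_connect_total pp (Da _ rp) (Db _ rp)).
Qed.

Lemma dominates_via w u y : dominates w y -> connect A u y -> ~ connect A u w ->
  dominates w u.
Proof.
move=> Dw /connectP [q qq ey] nuw p /andP [pp /eqP ep].
have := Dw (p ++ q); rewrite /root_path cat_path pp last_cat ep qq -ey eqxx.
rewrite -cat_cons mem_cat => /(_ isT) /orP [//|wq].
by case: nuw; apply: (path_connect qq); rewrite inE wq orbT.
Qed.

Lemma dominates_path_src w s q u : dominates w u -> path A s q -> last s q = u ->
  w \notin q -> dominates w s.
Proof.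
move=> D pq lq wq P /andP [pP /eqP lP].
have := D (P ++ q); rewrite /root_path cat_path pP lP pq last_cat lP lq eqxx.
by rewrite -cat_cons mem_cat (negbTE wq) orbF; apply.
Qed.

Lemma ret_cycle_of_merge b c v : A b v -> A c v -> b != c ->
  exists s p1 p2, ret_cycle A s v p1 p2 /\ (b, v) \in zip (s :: p1) p1.
Proof.
move=> Ab Ac ne.
have [Pb /andP [pPb /eqP lPb]] := root_pathP b.
have [Pc /andP [pPc /eqP lPc]] := root_pathP c.
have pR : path A rho (rcons Pb v) by rewrite rcons_path pPb lPb Ab.
have pQ : path A rho (rcons Pc v) by rewrite rcons_path pPc lPc Ac.
have eL : last rho (rcons Pb v) = last rho (rcons Pc v) by rewrite !last_rcons.
have arc_last P : (last rho P, v) \in zip (rho :: rcons P v) (rcons P v).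
  by rewrite -cats1 arcs_last_cat.
have arR := arc_last Pb; rewrite lPb in arR.
have arQ : (b, v) \notin zip (rho :: rcons Pc v) (rcons Pc v).
  apply/negP => H; move/eqP: ne; apply.
  by apply: (arcs_uniq_in (acyclic_path_uniq pQ) H); rewrite -lPc arc_last.
have [s [t [p1 [p2 [C H1 _ _ [_ _ Ht]]]]]] := ret_cycle_of_paths pR pQ eL arR arQ.
have et : t = v by apply: Ht; rewrite inE mem_rcons mem_head orbT.
by rewrite et in C; exists s, p1, p2.
Qed.

Lemma nonstrict_ret_cycle w y : connect A w y -> ~ dominates w y ->
  exists s t p1 p2, [/\ ret_cycle A s t p1 p2, w \in p1, w != t & connect A t y].
Proof.
move=> wy nd; have [Q /andP [pQ /eqP lQ] wQ] := not_dominatesP nd.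
have [Pw /andP [pPw /eqP lPw]] := root_pathP w.
case/connectP: wy => q pq eq.
case/lastP: Pw pPw lPw => [|Pw' w'] pPw lPw.
  by move: wQ; rewrite -lPw mem_head.
rewrite last_rcons in lPw; rewrite lPw in pPw.
have pR : path A rho (rcons Pw' w ++ q) by rewrite cat_path pPw last_rcons pq.
have arR : (last rho Pw', w) \in zip (rho :: rcons Pw' w ++ q) (rcons Pw' w ++ q).
  by rewrite cat_rcons arcs_last_cat.
have arQ : (last rho Pw', w) \notin zip (rho :: Q) Q.
  by apply: contra wQ => /mem_arcs [_ h]; rewrite inE h orbT.
have eL : last rho (rcons Pw' w ++ q) = last rho Q by rewrite last_cat last_rcons -eq lQ.
have [s [t [p1 [p2 [C H1 _ tQ [ty _ _]]]]]] := ret_cycle_of_paths pR pQ eL arR arQ.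
exists s, t, p1, p2; split => //.
- by case: (mem_arcs H1).
- by apply: contraNneq wQ => ->.
- by move: ty; rewrite last_cat last_rcons -eq.
Qed.

Lemma ret_cycle_nonstrict s t p1 p2 w y : ret_cycle A s t p1 p2 -> w \in p1 -> w != t ->
  connect A t y -> connect A w y /\ ~ dominates w y.
Proof.
move=> C win wt ty.
have winS : w \in s :: p1 by rewrite inE win orbT.
have [sw wt'] := ret_cycle_connect C winS.
split=> [|D]; first exact: connect_trans wt' ty.
have [P0 /andP [pP0 /eqP lP0]] := root_pathP s.
have [pp2 l2 _] := ret_cycle_dpath (ret_cycleC C).
case/connectP: ty => q pq eq.
have := D (P0 ++ p2 ++ q).
rewrite /root_path !cat_path pP0 lP0 pp2 !last_cat lP0 l2 pq -eq eqxx => /(_ isT).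
rewrite -cat_cons !mem_cat => /or3P [wP0|wp2|wq].
- have [_ ws] := path_connect_mem pP0 wP0; rewrite lP0 in ws.
  by move: (ret_cycle_src_notin C); rewrite -(connect_antisym ws sw) win.
- have [_ _ _ /(_ w winS)] := C; rewrite inE wp2 orbT => /(_ isT) [ews|ewt].
    by move: (ret_cycle_src_notin C); rewrite -ews win.
  by rewrite ewt eqxx in wt.
- have tw : connect A t w by apply: (path_connect pq); rewrite inE wq orbT.
  by rewrite (connect_antisym wt' tw) eqxx in wt.
Qed.

Section Cactus.
Variables (X : finType) (phi : X -> V).
Hypothesis no_shared : no_shared_arc A.
Hypothesis labelled : forall v,
  is_leaf A v || (is_tree_vertex A v && (outdeg A v == 1)) -> exists x, phi x = v.

Local Notation SS := (Sset A rho phi).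
Local Notation HH := (Hset A rho phi).

Lemma unlabeled_child v : (forall x, phi x != v) -> exists c, A v c.
Proof.
move=> nl; case: (pickP (A v)) => [c Ac|none]; first by exists c.
have [|x /eqP] := labelled (v := v); last by rewrite (negbTE (nl x)).
apply/orP; left; rewrite /is_leaf /outdeg cards_eq0; apply/eqP/setP => z.
by rewrite !inE none.
Qed.

Lemma unlabeled_tree_two_children v : (forall x, phi x != v) -> ~~ is_reticulation A v ->
  exists c1 c2, [/\ A v c1, A v c2 & c1 != c2].
Proof.
move=> nl tv; suff /card_gt1P [c1 [c2 [h1 h2 ne]]] : 1 < outdeg A v.
  by exists c1, c2; rewrite !inE in h1 h2.
rewrite ltnNge; apply/negP => le1.
have [|x /eqP] := labelled (v := v); last by rewrite (negbTE (nl x)).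
have [c Ac] := unlabeled_child nl.
apply/orP; right; rewrite /is_tree_vertex leqNgt tv eqn_leq le1 /= /outdeg card_gt0.
by apply/set0Pn; exists c; rewrite inE.
Qed.

Lemma connect_label v : exists x, connect A v (phi x).
Proof.
have [n] := ubnP #|[set y | connect A v y]|; elim: n v => // n IH v lt_n.
case: (boolP [exists x, phi x == v]) => [/existsP [x /eqP <-]|nl].
  by exists x; rewrite connect0.
have [c Ac] : exists c, A v c.
  by apply: unlabeled_child => x; apply: contraNneq nl => <-; apply/existsP; exists x.
have [|x cx] := IH c.
  rewrite ltnS in lt_n; apply: (leq_trans _ lt_n); apply: proper_card.
  rewrite properE; apply/andP; split.
    by apply/subsetP => y; rewrite !inE; apply: connect_trans (connect1 Ac).
  by apply/subsetPn; exists v; rewrite !inE ?connect0 // acyclicA.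
by exists x; apply: connect_trans (connect1 Ac) cx.
Qed.

Lemma in_Sset x u : x \in SS u <-> dominates u (phi x).
Proof. by rewrite inE; split => [/asboolP/strict_descendantE|/strict_descendantE/asboolP]. Qed.

Lemma in_Hset x u : x \in HH u <-> connect A u (phi x) /\ ~ dominates u (phi x).
Proof.
by rewrite inE; split => [/asboolP/nonstrict_descendantE|/nonstrict_descendantE/asboolP].
Qed.

Lemma Sset_Hset_disjoint x u : x \in SS u -> x \in HH u -> False.
Proof. by move=> /in_Sset D /in_Hset []. Qed.

Lemma Sset_root : SS rho = setT.
Proof. by apply/setP => x; rewrite in_setT; apply/in_Sset/dominates_root. Qed.

Lemma Hset_root : HH rho = set0.
Proof.
by apply/setP => x; rewrite in_set0; apply/negP => /in_Hset [_ []]; apply: dominates_root.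
Qed.

Lemma ret_cycle_shared_arc s t p1 p2 s' t' q1 q2 e :
  ret_cycle A s t p1 p2 -> ret_cycle A s' t' q1 q2 ->
  e \in zip (s :: p1) p1 -> e \in zip (s' :: q1) q1 -> s = s' /\ t = t'.
Proof.
move=> C C' e1 e2.
have m1 : e \in cycle_arcs s p1 p2 by rewrite mem_cat e1.
have m2 : e \in cycle_arcs s' q1 q2 by rewrite mem_cat e2.
have [es H] := no_shared C C' (ex_intro _ e (conj m1 m2)); split => //.
have [_ l1 _] := ret_cycle_dpath C.
have [_ l1' _] := ret_cycle_dpath C'; have [_ l2' _] := ret_cycle_dpath (ret_cycleC C').
by case: H => [[f _]|[f _]]; rewrite -l1 f es.
Qed.

Lemma ret_cycle_sink_reticulation s t p1 p2 : ret_cycle A s t p1 p2 -> is_reticulation A t.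
Proof.
move=> C; have [c Hc] := arcs_in s (ret_cycle_sink_mem C).
have [d Hd] := arcs_in s (ret_cycle_sink_mem (ret_cycleC C)).
have [pp1 l1 u1] := ret_cycle_dpath C; have [pp2 l2 u2] := ret_cycle_dpath (ret_cycleC C).
apply: (two_parents_reticulation (path_arcs_rel pp1 Hc) (path_arcs_rel pp2 Hd)).
apply/eqP => ecd; rewrite -ecd in Hd.
case: (mem_arcs Hc) => c1 _; case: (mem_arcs Hd) => c2 _.
case: C => _ _ ne /(_ c c1 c2) [ec|ec].
  rewrite ec in Hc Hd.
  by move/eqP: ne; apply; rewrite (uniq_arcs_last u1 Hc l1) (uniq_arcs_last u2 Hd l2).
by move: (arc_irrefl t); rewrite -{1}ec (path_arcs_rel pp1 Hc).
Qed.

Lemma ret_cycle_inner_tree s t p1 p2 v : ret_cycle A s t p1 p2 -> v \in p1 -> v != t ->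
  ~~ is_reticulation A v.
Proof.
move=> C vin vt; apply/negP; rewrite /is_reticulation /indeg => /card_gt1P [a [b [+ + ab]]].
have [pp1 _ _] := ret_cycle_dpath C; have [c Hc] := arcs_in s vin.
rewrite !inE => Aa Ab.
have [b' Ab' b'c] : exists2 b', A b' v & c != b'.
  by case: (eqVneq c a) => [eca|]; [exists b; rewrite // eca | exists a].
have [s' [q1 [q2 [C' H1]]]] := ret_cycle_of_merge (path_arcs_rel pp1 Hc) Ab' b'c.
by have [_ etv] := ret_cycle_shared_arc C C' Hc H1; rewrite etv eqxx in vt.
Qed.

(* The source of a reticulation cycle dominates everything below its first
   arc: a root path avoiding it would close a second cycle through that arc. *)
Lemma ret_cycle_src_dominates s t p1 p2 v y : ret_cycle A s t p1 p2 -> v \in p1 ->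
  connect A v y -> dominates s y.
Proof.
move=> C vin vy Q /andP [pQ /eqP lQ]; apply/negPn/negP => sQ.
have [pp1 _ _] := ret_cycle_dpath C.
case: p1 C vin pp1 => [//|v1 p1] C vin /andP [Asv1 pp1].
have [v1v _] := path_connect_mem pp1 vin.
case/connectP: (connect_trans v1v vy) => q pq eq.
have [P0 /andP [pP0 /eqP lP0]] := root_pathP s.
have pR : path A rho (P0 ++ v1 :: q) by rewrite cat_path pP0 lP0 /= Asv1 pq.
have eL : last rho (P0 ++ v1 :: q) = last rho Q by rewrite last_cat lQ /= -eq.
have arR : (s, v1) \in zip (rho :: P0 ++ v1 :: q) (P0 ++ v1 :: q).
  by rewrite -{1}lP0 arcs_last_cat.
have arQ : (s, v1) \notin zip (rho :: Q) Q by apply: contra sQ => /mem_arcs [].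
have [s' [t' [q1 [q2 [C' H1 s'Q _ _]]]]] := ret_cycle_of_paths pR pQ eL arR arQ.
have [ess _] := ret_cycle_shared_arc C C' (mem_head _ _) H1.
by move: sQ; rewrite ess s'Q.
Qed.

Lemma ret_cycle_side_escape s t p1 p2 v v' : ret_cycle A s t p1 p2 ->
  (v, v') \in zip (s :: p1) p1 -> v != s ->
  exists x, connect A v (phi x) /\ ~~ connect A v' (phi x).
Proof.
move=> C ar vs; have [pp1 _ _] := ret_cycle_dpath C.
have Avv' := path_arcs_rel pp1 ar.
have vin : v \in p1 by case: (mem_arcs ar); rewrite inE (negbTE vs).
have vt : v != t.
  have v'in : v' \in s :: p1 by case: (mem_arcs ar) => _ h; rewrite inE h orbT.
  have [_ v't] := ret_cycle_connect C v'in.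
  by apply: contraNneq (acyclicA Avv') => ->.
case: (boolP [exists x, phi x == v]) => [/existsP [x /eqP ex]|nl].
  by exists x; rewrite ex connect0; split => //; apply: acyclicA.
have nl' x : phi x != v by apply: contraNneq nl => <-; apply/existsP; exists x.
have [c1 [c2 [A1 A2 n12]]] := unlabeled_tree_two_children nl' (ret_cycle_inner_tree C vin vt).
have [c Avc cv'] : exists2 c, A v c & c != v'.
  by case: (eqVneq c1 v') => [e1|n1]; [exists c2; rewrite // -e1 eq_sym | exists c1].
have [x cx] := connect_label c.
exists x; split; first exact: connect_trans (connect1 Avc) cx.
apply/negP => v'x; rewrite eq_sym in cv'.
have [t' [q1 [q2 [C' H1 _]]]] := ret_cycle_of_branches Avv' Avc cv' v'x cx.
by have [esv _] := ret_cycle_shared_arc C C' ar H1; rewrite esv eqxx in vs.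
Qed.

Lemma ret_cycle_tree_sink_unique s t p1 p2 s' t' q1 q2 w : ~~ is_reticulation A w ->
  ret_cycle A s t p1 p2 -> w \in p1 -> ret_cycle A s' t' q1 q2 -> w \in q1 -> t = t'.
Proof.
move=> tw C win C' win'.
have [a Ha] := arcs_in s win; have [b Hb] := arcs_in s' win'.
have [pp1 _ _] := ret_cycle_dpath C; have [pq1 _ _] := ret_cycle_dpath C'.
have eab := tree_parent_unique tw (path_arcs_rel pp1 Ha) (path_arcs_rel pq1 Hb).
rewrite eab in Ha.
by have [_ ->] := ret_cycle_shared_arc C C' Ha Hb.
Qed.

Lemma nonstrict_sinkE s t p1 p2 w y : ~~ is_reticulation A w -> ret_cycle A s t p1 p2 ->
  w \in p1 -> w != t -> (connect A w y /\ ~ dominates w y) <-> connect A t y.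
Proof.
move=> tw C win wt; split; last by move=> ty; apply: (ret_cycle_nonstrict C win wt ty).
case=> wy nd; have [s' [t' [q1 [q2 [C' win' wt' ty]]]]] := nonstrict_ret_cycle wy nd.
by rewrite (ret_cycle_tree_sink_unique tw C win C' win').
Qed.

Lemma Hset_ret_cycle s t p1 p2 w x : ~~ is_reticulation A w -> ret_cycle A s t p1 p2 ->
  w \in p1 -> w != t -> (x \in HH w) = connect A t (phi x).
Proof.
move=> tw C win wt; apply/idP/idP => [/in_Hset/(nonstrict_sinkE _ tw C win wt)//|tx].
by apply/in_Hset/(nonstrict_sinkE _ tw C win wt).
Qed.

Lemma tree_dominates_label u : ~~ is_reticulation A u -> exists x, dominates u (phi x).
Proof.
move=> tu.
case: (pselect (exists s t p1 p2, [/\ ret_cycle A s t p1 p2, u \in p1 & u != t]));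
  last first.
  move=> NC; have [x ux] := connect_label u; exists x; apply: contrapT => nd.
  have [s [t [p1 [p2 [C uin ut _]]]]] := nonstrict_ret_cycle ux nd.
  by apply: NC; exists s, t, p1, p2.
case=> s [t [p1 [p2 [C uin ut]]]]; have [_ l1 _] := ret_cycle_dpath C.
have uS : u \in s :: p1 by rewrite inE uin orbT.
have [|u' ar] := arcs_out uS; first by rewrite l1.
have us : u != s by apply: contraNneq (ret_cycle_src_notin C) => <-.
have [x [ux u'x]] := ret_cycle_side_escape C ar us.
exists x; apply: contrapT => nd.
have tx := (nonstrict_sinkE (phi x) tu C uin ut).1 (conj ux nd).
have u'in : u' \in s :: p1 by case: (mem_arcs ar) => _ h; rewrite inE h orbT.
have [_ u't] := ret_cycle_connect C u'in.
by rewrite (connect_trans u't tx) in u'x.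
Qed.

Lemma ret_cycle_dominator_on_side s t p1 p2 u w y : ret_cycle A s t p1 p2 -> u \in p1 ->
  connect A t y -> dominates w u -> w != u -> ~ dominates w y ->
  exists p1a p1b, p1 = p1a ++ u :: p1b /\ w \in p1a.
Proof.
move=> C uin ty D wu ndy; have [p1a [p1b e1]] := mem_splitE uin.
exists p1a, p1b; split => //; apply/negPn/negP => wn; apply: ndy.
have [pp1 _ _] := ret_cycle_dpath C.
have pu : path A s (rcons p1a u).
  by move: pp1; rewrite e1 cat_path rcons_path => /andP [-> /andP [-> _]].
have Dws : dominates w s.
  by apply: (dominates_path_src D pu); rewrite ?last_rcons // mem_rcons inE negb_or wu.
exact: dominates_trans Dws (ret_cycle_src_dominates C (ret_cycle_sink_mem C) ty).
Qed.

Lemma ret_cycle_side_Sset_witness s t p1 p2 p1a p1b u w :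
  ~~ is_reticulation A w -> ret_cycle A s t p1 p2 -> p1 = p1a ++ u :: p1b ->
  w \in p1a -> w != t -> exists2 y, y \in SS w & y \notin SS u.
Proof.
move=> tw C e1 wa wt; have win : w \in p1 by rewrite e1 mem_cat wa.
have uS : u \in s :: p1 by rewrite e1 inE mem_cat inE eqxx !orbT.
have [_ ut'] := ret_cycle_connect C uS.
have [pp1 _ _] := ret_cycle_dpath C.
have pu : path A s (rcons p1a u).
  by move: pp1; rewrite e1 cat_path rcons_path => /andP [-> /andP [-> _]].
have wu : w != u.
  have [_ _] := ret_cycle_dpath C; rewrite e1 -cat_cons cat_uniq.
  case/and3P=> _ /hasPn /(_ u (mem_head _ _)) /negP uS' _.
  by apply/eqP => ewu; apply: uS'; rewrite -ewu inE wa orbT.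
have wpu : w \in s :: rcons p1a u by rewrite inE mem_rcons inE wa !orbT.
have [|w' arw] := arcs_out wpu; first by rewrite last_rcons.
have arw1 : (w, w') \in zip (s :: p1) p1.
  by apply: (arcs_infix (l1 := [::]) (l2 := p1b)) arw; rewrite e1 -cat_rcons.
have ws : w != s by apply: contraNneq (ret_cycle_src_notin C) => <-.
have [y [wy w'y]] := ret_cycle_side_escape C arw1 ws.
have w'u : connect A w' u.
  have w'in : w' \in s :: rcons p1a u by case: (mem_arcs arw) => _ h; rewrite inE h orbT.
  by have [_] := path_connect_mem pu w'in; rewrite last_rcons.
exists y.
  apply/in_Sset; apply: contrapT => nd.
  have ty := (nonstrict_sinkE (phi y) tw C win wt).1 (conj wy nd).
  by rewrite (connect_trans (connect_trans w'u ut') ty) in w'y.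
apply/negP => /in_Sset /dominates_connect uy.
by rewrite (connect_trans w'u uy) in w'y.
Qed.

Lemma ancestor_set_pairs u w : ~~ is_reticulation A u -> ~~ is_reticulation A w ->
  connect A w u -> w != u ->
  [\/ SS u :|: HH u \subset HH w,
      SS u :|: HH u \subset SS w |
      [/\ SS u \proper SS w, HH u = HH w & HH w != set0]].
Proof.
move=> tu tw wu nwu.
case: (pselect (dominates w u)) => [D|ND]; last first.
  have [s [t [p1 [p2 [C win wt tu']]]]] := nonstrict_ret_cycle wu ND.
  apply: Or31; apply/subsetP => x; rewrite in_setU (Hset_ret_cycle _ tw C win wt).
  case/orP => [/in_Sset/dominates_connect|/in_Hset [ux _]]; last exact: connect_trans ux.
  exact: connect_trans.
have SSuw : SS u \subset SS w.
  by apply/subsetP => x /in_Sset Sx; apply/in_Sset; apply: dominates_trans D Sx.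
case: (boolP (HH u \subset SS w)) => HS.
  by apply: Or32; rewrite subUset SSuw HS.
apply: Or33; case/subsetPn: HS => x /in_Hset [ux ndx] /negP xS.
have ndw : ~ dominates w (phi x) by move/in_Sset.
have [s [t [p1 [p2 [C uin ut tx]]]]] := nonstrict_ret_cycle ux ndx.
have [p1a [p1b [e1 wa]]] := ret_cycle_dominator_on_side C uin tx D nwu ndw.
have uS : u \in s :: p1 by rewrite inE uin orbT.
have [_ ut'] := ret_cycle_connect C uS.
have win : w \in p1 by rewrite e1 mem_cat wa.
have wt : w != t.
  by apply: contraNneq ut => ewt; apply/eqP/(connect_antisym ut'); rewrite -ewt.
have eH : HH u = HH w.
  by apply/setP => z; rewrite (Hset_ret_cycle _ tu C uin ut) (Hset_ret_cycle _ tw C win wt).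
split => //; last by apply/set0Pn; exists x; rewrite -eH; apply/in_Hset.
apply/properP; split => //.
exact: ret_cycle_side_Sset_witness tw C e1 wa wt.
Qed.

Lemma sp_le_ancestor u w : ~~ is_reticulation A u -> ~~ is_reticulation A w ->
  connect A w u -> w != u ->
  sp_le (SS u, HH u) (SS w, HH w) /\ sp_le (HH u, set0) (SS w, HH w).
Proof.
move=> tu tw wu nwu; rewrite /sp_le setU0.
case: (ancestor_set_pairs tu tw wu nwu) => [h|h|[h1 h2 h3]].
- by rewrite h; move: h; rewrite subUset => /andP [_ ->]; rewrite !orbT.
- by rewrite h; move: h; rewrite subUset => /andP [_ ->]; rewrite !orbT.
by rewrite h1 h2 eqxx h3 subxx !orbT.
Qed.

Section Ranked.
Variable r : V -> nat.
Hypothesis stampr : is_time_stamp A phi r.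

Lemma rank_label x : r (phi x) = 0.
Proof. by case: stampr. Qed.

Lemma rank_tree_arc u v : A u v -> ~~ is_reticulation A v -> r v < r u.
Proof. by case: stampr => _ + _; apply. Qed.

Lemma rank_reticulation_arc u v : A u v -> is_reticulation A v -> r u = r v.
Proof. by case: stampr => _ _; apply. Qed.

Lemma rank_arc u v : A u v -> r v <= r u.
Proof.
move=> Auv; case: (boolP (is_reticulation A v)) => Hv.
  by rewrite (rank_reticulation_arc Auv Hv).
exact: ltnW (rank_tree_arc Auv Hv).
Qed.

Lemma rank_path s p : path A s p -> r (last s p) <= r s.
Proof.
elim: p s => [|c p IH] s //= /andP [Asc pp].
exact: leq_trans (IH _ pp) (rank_arc Asc).
Qed.

Lemma rank_connect u v : connect A u v -> r v <= r u.
Proof. by case/connectP => p pp ->; apply: rank_path. Qed.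

Lemma sigma_root : sigma r = r rho.
Proof.
apply/eqP; rewrite eqn_leq; apply/andP; split.
  by apply/bigmax_leqP => v _; apply: rank_connect; apply: connect_root.
by apply: (leq_bigmax rho).
Qed.

Lemma rank_le_sigma v : r v <= sigma r.
Proof. by rewrite sigma_root; apply: rank_connect; apply: connect_root. Qed.

Lemma inVi u i : (u \in Vi A r i) = (r u <= i) && [forall p, A p u ==> (i < r p)].
Proof. by rewrite /Vi inE. Qed.

Lemma Vi_tree u i : u \in Vi A r i -> ~~ is_reticulation A u.
Proof.
rewrite inVi => /andP [ri /forallP H]; apply/negP => ret.
have [p Apu] := reticulation_parent ret.
by move: (H p); rewrite Apu /= (rank_reticulation_arc Apu ret) ltnNge ri.
Qed.

Lemma Vi_connect_eq u v i : u \in Vi A r i -> v \in Vi A r i -> connect A u v -> u = v.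
Proof.
move=> Hu Hv Huv; apply/eqP/negPn/negP => ne.
case: (connect_last_arc Huv ne) => q Huq Aqv.
move: Hv; rewrite inVi => /andP [_ /forallP /(_ q)]; rewrite Aqv /= => iq.
move: Hu; rewrite inVi => /andP [ri _].
by move: (leq_trans (rank_connect Huq) ri); rewrite leqNgt iq.
Qed.

Lemma path_meets_Vi a p i : path A a p -> r (last a p) <= i < r a ->
  exists2 v, v \in p & v \in Vi A r i.
Proof.
elim: p a => [|c p IH] a /=; first by move=> _; rewrite ltnNge => /andP [->].
case/andP => Aac pp /andP [Hl ia].
case: (leqP (r c) i) => ci.
  exists c; first by rewrite mem_head.
  have tc : ~~ is_reticulation A c.
    by apply/negP => ret; move: ia; rewrite (rank_reticulation_arc Aac ret) ltnNge ci.
  rewrite inVi ci /=; apply/forallP => q; apply/implyP => Aqc.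
  by rewrite (tree_parent_unique tc Aqc Aac).
case: (IH c pp); first by rewrite Hl ci.
by move=> v vin Hv; exists v => //; rewrite inE vin orbT.
Qed.

Lemma Vi_ancestor u i : r u <= i -> exists2 w, w \in Vi A r i & connect A w u.
Proof.
move=> ui; case: (leqP (r rho) i) => ri.
  exists rho; last exact: connect_root.
  rewrite inVi ri /=; apply/forallP => p; by rewrite (negbTE (root_no_parent p)).
case/connectP: (connect_root u) => p pp eu.
case: (path_meets_Vi pp (i := i)); first by rewrite -eu ui ri.
move=> w win Hw; exists w => //.
have wi : w \in rho :: p by rewrite inE win orbT.
by have [_ H] := path_connect_mem pp wi; rewrite eu.
Qed.

Lemma Vi_sigma : Vi A r (sigma r) = [set rho].
Proof.
apply/setP => v; rewrite inVi inE rank_le_sigma /=.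
apply/forallP/eqP => [H|->]; last by move=> p; rewrite (negbTE (root_no_parent p)).
apply/eqP/negPn/negP => ne; case: (parent_exists ne) => p Apv.
by move: (H p); rewrite Apv /= ltnNge rank_le_sigma.
Qed.

Lemma Vi_rank_eq j : (exists v, r v = j) -> exists2 w, w \in Vi A r j & r w = j.
Proof.
case=> v <-; have [w wj wv] := Vi_ancestor (leqnn (r v)); exists w => //.
by apply/eqP; rewrite eqn_leq (rank_connect wv) andbT; move: wj; rewrite inVi => /andP [].
Qed.

Lemma ret_cycle_side_not_arc s t p2 : ~ ret_cycle A s t [:: t] p2.
Proof.
move=> C; have [pp2 l2 u2] := ret_cycle_dpath (ret_cycleC C).
case: p2 C pp2 l2 u2 => [|h p2] C pp2 l2 u2.
  by move: (ret_cycle_sink_mem (ret_cycleC C)).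
case/andP: pp2 => Ash pp2.
have ht : h != t.
  apply/eqP => eht; case: C => _ _ /eqP []; case/andP: u2 => _ u2.
  by rewrite eht in u2 l2 *; rewrite (uniq_last_head u2 l2).
have Ast : A s t by case: (ret_cycle_dpath C) => /andP [].
have := rank_tree_arc Ash (ret_cycle_inner_tree (ret_cycleC C) (mem_head h p2) ht).
rewrite (rank_reticulation_arc Ast (ret_cycle_sink_reticulation C)) ltnNge.
by rewrite -l2 (rank_path pp2).
Qed.

Lemma SiP a i : a \in Si A rho phi r i -> exists2 u, u \in Vi A r i &
  a = (SS u, HH u) \/ (a = (HH u, set0) /\ HH u != set0).
Proof.
case/setUP => /imsetP [u]; first by move=> uin ->; exists u => //; left.
by rewrite inE => /andP [uin ne] ->; exists u => //; right.
Qed.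

Lemma Si_SH u i : u \in Vi A r i -> (SS u, HH u) \in Si A rho phi r i.
Proof. by move=> uin; apply/setUP; left; apply/imsetP; exists u. Qed.

Lemma Si_H0 u i : u \in Vi A r i -> HH u != set0 -> (HH u, set0) \in Si A rho phi r i.
Proof. by move=> uin ne; apply/setUP; right; apply/imsetP; exists u; rewrite // inE uin. Qed.

Lemma Si_sigma : Si A rho phi r (sigma r) = [set (setT, set0)].
Proof.
rewrite /Si Vi_sigma imset_set1 Sset_root Hset_root.
have -> : [set u in [set rho] | HH u != set0] = set0.
  by apply/setP => v; rewrite !inE; case: eqP => // ->; rewrite Hset_root eqxx.
by rewrite imset0 setU0.
Qed.

Lemma Si_SP1 i j a : i < j -> a \in Si A rho phi r i ->
  exists2 b, b \in Si A rho phi r j & sp_le a b.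
Proof.
move=> ij /SiP [u ui Ha].
have ru : r u <= i by move: ui; rewrite inVi => /andP [].
have [w wj wu] := Vi_ancestor (leq_trans ru (ltnW ij)).
case: (eqVneq w u) => [ewu|nwu].
  rewrite ewu in wj; exists a; last exact: sp_le_refl.
  by case: Ha => [->|[-> ne]]; [apply: Si_SH | apply: Si_H0].
exists (SS w, HH w); first exact: Si_SH.
have [le1 le2] := sp_le_ancestor (Vi_tree ui) (Vi_tree wj) wu nwu.
by case: Ha => [|[]] ->.
Qed.

Lemma Vi_dominates_eq i u v y : u \in Vi A r i -> v \in Vi A r i ->
  dominates v y -> connect A u y -> u = v.
Proof.
move=> ui vi D /connectP [q pq ey].
have [Pu /andP [pPu /eqP lPu]] := root_pathP u.
have := D (Pu ++ q); rewrite /root_path cat_path pPu lPu pq last_cat lPu -ey eqxx.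
rewrite -cat_cons mem_cat => /(_ isT) /orP [vPu|vq].
  by have [_] := path_connect_mem pPu vPu; rewrite lPu => /(Vi_connect_eq vi ui).
by apply: Vi_connect_eq ui vi _; apply: (path_connect pq); rewrite inE vq orbT.
Qed.

(* Otherwise a path from [t] down to a label crosses [V_i] at some [v]; the
   labels dominated by [v] lie in [H(u)], which forces [v = u], although [u]
   dominates a label of its own. *)
Lemma Vi_sink_rank i u t : u \in Vi A r i ->
  (forall x, (x \in HH u) = connect A t (phi x)) -> r t <= i.
Proof.
move=> ui Ht; rewrite leqNgt; apply/negP => it.
have [x /connectP [q pq ex]] := connect_label t.
have [|v vq vi] := path_meets_Vi pq (i := i); first by rewrite -ex rank_label it.
have tv : connect A t v by apply: (path_connect pq); rewrite inE vq orbT.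
have [y dy] := tree_dominates_label (Vi_tree vi).
have /in_Hset [uy _] : y \in HH u by rewrite Ht (connect_trans tv (dominates_connect dy)).
have evu := Vi_dominates_eq ui vi dy uy; rewrite -evu in tv.
have [z dz] := tree_dominates_label (Vi_tree ui).
have /in_Hset [_ []] : z \in HH u by rewrite Ht (connect_trans tv (dominates_connect dz)).
exact: dz.
Qed.

Lemma ret_cycle_side_Vi s t p1 p2 w i : ret_cycle A s t p1 p2 -> w \in p1 ->
  r t <= i < r w -> exists v, [/\ v \in p1, v \in Vi A r i, connect A w v & w != v].
Proof.
move=> C w1 /andP [ti iw]; have [pp1 l1 _] := ret_cycle_dpath C.
have [p1a [p1b e1]] := mem_splitE w1.
have pb : path A w p1b.
  by apply: (path_infix (l1 := s :: p1a) (l2 := [::]) pp1); rewrite e1 cats0.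
have lb : last w p1b = t by rewrite -l1 e1 last_cat.
have [|v vb vi] := path_meets_Vi pb (i := i); first by rewrite lb ti.
exists v; split => //; first by rewrite e1 mem_cat inE vb !orbT.
  by apply: (path_connect pb); rewrite inE vb orbT.
by apply: contraTneq iw => ->; move: vi; rewrite inVi -leqNgt => /andP [].
Qed.

Lemma Si_SP2 i j b : i < j -> b \in Si A rho phi r j -> b.2 != set0 ->
  (exists2 a, a \in Si A rho phi r i & a.2 = b.2) ->
  exists2 a, a \in Si A rho phi r i & a.2 = b.2 /\ sp_le a b.
Proof.
move=> ij /SiP [w wj [->|[-> _]]] /= bne; last by rewrite eqxx in bne.
case=> a /SiP [u ui [->|[-> _]]] /= ea; last by rewrite -ea eqxx in bne.
case: (boolP (w \in Vi A r i)) => wi.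
  by exists (SS w, HH w); [apply: Si_SH | split => //; apply: sp_le_refl].
have iw : i < r w.
  move: wi wj; rewrite !inVi negb_and -ltnNge => /orP [//|/forallPn [p]].
  rewrite negb_imply -ltnNge => /andP [Apw pi] /andP [_ /forallP /(_ p)].
  by rewrite Apw /= => jp; move: (ltn_trans ij jp); rewrite ltnNge -ltnS pi.
have tw := Vi_tree wj.
case/set0Pn: bne => x /in_Hset [wx ndx].
have [s [t [p1 [p2 [C w1 wt tx]]]]] := nonstrict_ret_cycle wx ndx.
have rt : r t <= i.
  by apply: (Vi_sink_rank ui) => y; rewrite ea (Hset_ret_cycle _ tw C w1 wt).
have [v [v1 vi wv nwv]] := ret_cycle_side_Vi C w1 (introT andP (conj rt iw)).
have tv := Vi_tree vi.
have vt : v != t by apply: contraNneq tv => ->; apply: ret_cycle_sink_reticulation C.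
have ehv : HH v = HH w.
  by apply/setP => y; rewrite (Hset_ret_cycle _ tv C v1 vt) (Hset_ret_cycle _ tw C w1 wt).
exists (SS v, HH v); first exact: Si_SH.
by split; [rewrite /= ehv | case: (sp_le_ancestor tv tw wv nwv)].
Qed.

Lemma Hset_label_dominator u w x : x \in HH u -> dominates w (phi x) -> r u < r w ->
  dominates w u.
Proof.
case/in_Hset => ux nd Dw ruw.
have [s [t [p1 [p2 [C uin ut tx]]]]] := nonstrict_ret_cycle ux nd.
have uS : u \in s :: p1 by rewrite inE uin orbT.
have [_ ut'] := ret_cycle_connect C uS.
have ntw : ~ connect A t w.
  by move/rank_connect/leq_trans/(_ (rank_connect ut')); rewrite leqNgt ruw.
have Dwt := dominates_via Dw tx ntw.
have [pp1 l1 _] := ret_cycle_dpath C; have [pp2 l2 _] := ret_cycle_dpath (ret_cycleC C).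
have Dws : dominates w s.
  case: (boolP (w \in p1)) => w1; last exact: dominates_path_src Dwt pp1 l1 w1.
  case: (boolP (w \in p2)) => w2; last exact: dominates_path_src Dwt pp2 l2 w2.
  have [_ _ _ /(_ w)] := C; rewrite !inE w1 w2 !orbT => /(_ isT isT) [ews|ewt].
    by move: (ret_cycle_src_notin C); rewrite -ews w1.
  by case: ntw; rewrite ewt connect0.
exact: dominates_trans Dws (ret_cycle_src_dominates C uin (connect0 _ u)).
Qed.

Lemma unlabeled_tree_not_dominated_below w u : ~~ is_reticulation A w ->
  (forall x, phi x != w) -> ~ connect A u w ->
  ~ (forall y, connect A w (phi y) -> dominates u (phi y)).
Proof.
move=> tw nl nuw below.
have cu c : A w c -> connect A c u.
  move=> Awc; have [y cy] := connect_label c.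
  have D := below y (connect_trans (connect1 Awc) cy).
  have [Pw /andP [pPw /eqP lPw]] := root_pathP w.
  case/connectP: cy => q pq eq.
  have := D (Pw ++ c :: q).
  rewrite /root_path cat_path pPw lPw /= Awc pq last_cat lPw /= -eq eqxx => /(_ isT).
  rewrite -cat_cons mem_cat => /orP [uPw|uq].
    by case: nuw; have [_] := path_connect_mem pPw uPw; rewrite lPw.
  by have [] := path_connect_mem pq uq.
have [c1 [c2 [A1 A2 n12]]] := unlabeled_tree_two_children nl tw.
have [t [q1 [q2 [C H1 tu]]]] := ret_cycle_of_branches A1 A2 n12 (cu _ A1) (cu _ A2).
have [_ l1 u1] := ret_cycle_dpath C.
have c1t : c1 != t.
  apply: contraTneq H1 => ->; apply/negP => H1.
  by move: C; rewrite (uniq_arcs_last u1 H1 l1); apply: ret_cycle_side_not_arc.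
have [_ c1q1] := mem_arcs H1.
have c1q : c1 \in w :: q1 by rewrite inE c1q1 orbT.
have [|c1' ar] := arcs_out c1q; first by rewrite l1.
have c1w : c1 != w by apply: contraNneq (ret_cycle_src_notin C) => <-.
have [z [cz c'z]] := ret_cycle_side_escape C ar c1w.
have c1'in : c1' \in w :: q1 by case: (mem_arcs ar) => _ hh; rewrite inE hh orbT.
have [_ c't] := ret_cycle_connect C c1'in.
have uz := dominates_connect (below z (connect_trans (connect1 A1) cz)).
by rewrite (connect_trans (connect_trans c't tu) uz) in c'z.
Qed.

Lemma Si_neq i j : i < j -> (exists v, r v = j) ->
  Si A rho phi r i <> Si A rho phi r j.
Proof.
move=> ij rj E; have [w wj rw] := Vi_rank_eq rj; have tw := Vi_tree wj.
have [x0 dx0] := tree_dominates_label tw.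
have : (SS w, HH w) \in Si A rho phi r i by rewrite E; apply: Si_SH.
case/SiP => u ui Hu; have tu := Vi_tree ui.
have ruw : r u < r w by rewrite rw; apply: leq_ltn_trans ij; move: ui; rewrite inVi => /andP [].
have nuw : ~ connect A u w by move/rank_connect; rewrite leqNgt ruw.
case: Hu => [[eS eH]|[[eS eH] _]]; last first.
  have x0u : x0 \in HH u by rewrite -eS; apply/in_Sset.
  have Dwu := Hset_label_dominator x0u dx0 ruw.
  have [z dz] := tree_dominates_label tu.
  have : z \in HH u by rewrite -eS; apply/in_Sset; apply: dominates_trans Dwu dz.
  by case/in_Hset.
have wu : connect A w u.
  have x0u : dominates u (phi x0) by apply/in_Sset; rewrite -eS; apply/in_Sset.
  by case: (dominates_total dx0 x0u).
have nwu : w != u by apply: contraTneq ruw => ->; rewrite ltnn.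
case: (ancestor_set_pairs tu tw wu nwu) => [h|h|[]]; last by rewrite eS properE subxx andbF.
  apply: (Sset_Hset_disjoint (x := x0) (u := w)); first exact/in_Sset.
  by apply: (subsetP h); rewrite in_setU -eS; apply/orP; left; apply/in_Sset.
apply: (unlabeled_tree_not_dominated_below tw _ nuw) => [x|y wy].
  by apply: contraTneq ruw => <-; rewrite rank_label.
apply/in_Sset; rewrite -eS; apply: contraT => ySw.
have yH : y \in HH w by apply/in_Hset; split => // /in_Sset; apply/negP.
by rewrite (subsetP h) // in_setU -eH yH orbT in ySw.
Qed.

End Ranked.
End Cactus.
End Rooted.
End Dag.

Theorem mainTheorem4 (X V : finType) (A : rel V) (rho : V) (phi : X -> V)
    (r : V -> nat) :
  0 < #|X| ->
  ranked_cactus A rho phi r ->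
  (forall i j, i < j <= sigma r ->
     sps_lt (Si A rho phi r i) (Si A rho phi r j)) /\
  Si A rho phi r (sigma r) = [set (setT, set0)].
Proof.
move=> _ [[[acyc noparent reach] _ shared labels] [stamp surj]].
split; first move=> i j /andP [ij js]; last exact: (Si_sigma noparent reach stamp).
split; last exact: (Si_neq acyc noparent reach shared labels stamp ij (surj j js)).
split=> [a|b]; first exact: (Si_SP1 acyc noparent reach shared labels stamp ij).
exact: (Si_SP2 acyc reach shared labels stamp ij).
Qed.
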